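(* Let $n\ge3$, $1\le s<n$, and let $D=\mathrm{pdiag}(d_1,\dots,d_n)$ with $d_1\le\dots\le d_s\le 0\le d_{s+1}\le\dots\le d_n$. Then for every integer $k\ge2$ and all $i,j\in[n]$, the $(i,j)$ entry of the max-plus power $D^k$ is $$(D^k)_{ij}=\begin{cases}(k-2)d_n & \text{if } \max(i,j)\le s,\\ \max\{k d_i,(k-2)d_n\} & \text{if } i=j>s,\\ \max\{(k-1)d_{\max(i,j)},(k-2)d_n\} & \text{if } i\neq j,\ \max(i,j)>s.\end{cases}$$
   Context: Max-plus conventions: $\varepsilon=-\infty$, $\oplus=\max$, $\otimes=+$; $(A\otimes B)_{ij}=\max_t(A_{it}+B_{tj})$ and $D^k$ is the $k$-fold max-plus product $D\otimes\cdots\otimes D$. $\mathrm{pdiag}(d_1,\dots,d_n)$ is the $n\times n$ matrix with real diagonal entries $d_1,\dots,d_n$ and all off-diagonal entries equal to the real number $0$. *)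

From HB Require Import structures.
From mathcomp Require Import all_boot all_order all_algebra.
From mathcomp Require Import reals constructive_ereal.
Set Implicit Arguments. Unset Strict Implicit. Unset Printing Implicit Defensive.
Import Order.TTheory GRing.Theory Num.Theory.
Local Open Scope ring_scope.
Local Open Scope ereal_scope.

Definition mp_mul (R : realDomainType) (n : nat) (A B : 'M[\bar R]_n) : 'M[\bar R]_n :=
  \matrix_(i, j) \big[maxe/-oo]_(t < n) (A i t + B t j).

Definition mp_id (R : realDomainType) (n : nat) : 'M[\bar R]_n :=
  \matrix_(i, j) if i == j then 0 else -oo.

Definition mp_pow (R : realDomainType) (n : nat) (D : 'M[\bar R]_n) (k : nat) : 'M[\bar R]_n :=
  iter k (mp_mul D) (mp_id R n).

(* pdiag(d_1,...,d_n) with 1-based d : nat -> R: entry (i,j) (0-based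
   ordinals) is d_(i+1) on the diagonal and the real number 0 off it. *)
Definition pdiag (R : realDomainType) (n : nat) (d : nat -> R) : 'M[\bar R]_n :=
  \matrix_(i, j) if i == j then (d i.+1)%:E else 0.

From mathcomp Require Import all_boot all_order all_algebra.
From mathcomp Require Import reals constructive_ereal.
From mathcomp Require Import lra zify.
Import Order.TTheory GRing.Theory Num.Theory.
Local Open Scope ring_scope.

(* (D^k)_ij is the best weight of a walk of length k from i to j, where a loop
   at t weighs d_t and every other step weighs 0. Two walks compete: one that
   loops at its larger endpoint as long as possible (k loops if i = j, else one
   step and k-1 loops), and one that spends two 0-steps to reach n, where d_n >= 0
   is the largest loop weight, and loops there k-2 times. The formula is proved
   for k = 2 directly (n >= 3 provides a middle index for the 0-weight walk) and
   propagated by induction via D^(k+1) = D (x) D^k. If max(i,j) <= s, the first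
   walk has weight <= 0 <= (k-2) d_n. *)

Section MaxPlus.
Variables (R : realDomainType) (n : nat).

Lemma mp_mul1 (A : 'M[\bar R]_n) : mp_mul A (mp_id R n) = A.
Proof.
apply/matrixP => i j; rewrite mxE (bigD1 j) //= big1 => [|t /negbTE tj].
  by rewrite mxE eqxx adde0 maxeNy.
by rewrite mxE tj addeNy.
Qed.

Lemma mp_pow1 (A : 'M[\bar R]_n) : mp_pow A 1 = A.
Proof. exact: mp_mul1. Qed.

Lemma mp_powS (A : 'M[\bar R]_n) (k : nat) : mp_pow A k.+1 = mp_mul A (mp_pow A k).
Proof. by []. Qed.

Lemma bigmaxe_fin_max (f : 'I_n -> R) (v w : R) :
  (forall t, f t <= Num.max v w) -> (exists t, v <= f t) -> (exists t, w <= f t) ->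
  (\big[maxe/-oo]_(t < n) (f t)%:E = (Num.max v w)%:E)%E.
Proof.
move=> f_le [tv vle] [tw wle]; apply/le_anti/andP; split.
  by apply: bigmax_le => [|t _]; rewrite ?leNye ?lee_fin.
have [_|_] := leP v w.
  by apply: le_trans (le_bigmax _ _ tw); rewrite lee_fin.
by apply: le_trans (le_bigmax _ _ tv); rewrite lee_fin.
Qed.

Lemma exists_ord_neq2 (i j : 'I_n) : (2 < n)%N -> exists t : 'I_n, (t != i) && (t != j).
Proof.
move=> n_gt2; have : (0 < #|~: [set i; j]|)%N.
  by have := cardsC [set i; j]; rewrite cards2 card_ord; case: (i != j); lia.
by case/card_gt0P => t; rewrite !inE negb_or => ?; exists t.
Qed.

End MaxPlus.

Section PdiagPowers.
Variables (R : realDomainType) (n : nat) (d : nat -> R).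
Hypothesis d_mono : forall a b : nat, (1 <= a)%N -> (a <= b)%N -> (b <= n)%N -> d a <= d b.
Hypothesis d_top_ge0 : 0 <= d n.
Hypothesis n_gt2 : (2 < n)%N.

(* Indices are 0-based ordinals, so d i.+1 is the paper's d_i. *)
Definition pdiag_pow_entry (k : nat) (i j : 'I_n) : R :=
  Num.max (if i == j then k%:R * d i.+1 else k.-1%:R * d (maxn i j).+1) (k.-2%:R * d n).

Lemma d_succ_mono {a b : nat} : (a <= b)%N -> (b < n)%N -> d a.+1 <= d b.+1.
Proof. by move=> ab bn; apply: d_mono. Qed.

Lemma d_succ_le_top {a : nat} : (a < n)%N -> d a.+1 <= d n.
Proof. by move=> an; apply: d_mono. Qed.

Lemma maxn_ord_lt (a b : 'I_n) : (maxn a b < n)%N.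
Proof. by rewrite gtn_max !ltn_ord. Qed.

Lemma mp_mul_pdiagE {A : 'M[\bar R]_n} {g : 'I_n -> 'I_n -> R} :
  (forall t j, A t j = (g t j)%:E) ->
  forall i j, mp_mul (pdiag n d) A i j =
    (\big[maxe/-oo]_(t < n) ((if i == t then d i.+1 else 0) + g t j)%:E)%E.
Proof.
move=> Ag i j; rewrite mxE; apply: eq_bigr => t _.
by rewrite Ag mxE EFinD; case: eqP.
Qed.

Lemma pdiag_pow_entry_step_ub (c : nat) (i t j : 'I_n) :
  (if i == t then d i.+1 else 0) + pdiag_pow_entry c.+2 t j <= pdiag_pow_entry c.+3 i j.
Proof.
have c_ge0 := ler0n R c; have dn_ge0 := d_top_ge0.
rewrite /pdiag_pow_entry !succnK !mulrSr.
case: (eqVneq i t) => [<-|it]; rewrite ?add0r.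
  rewrite addr_maxr ge_max !le_max; apply/andP; split; apply/orP.
    left; case: eqP => _; first lra.
    by have := d_succ_mono (leq_maxl i j) (maxn_ord_lt i j); lra.
  by right; have := d_succ_le_top (ltn_ord i); lra.
rewrite ge_max !le_max; apply/andP; split; apply/orP; last by right; lra.
case: (eqVneq t j) => [<-|_].
  left; rewrite (negPf it); apply: ler_wpM2l; first lra.
  exact: d_succ_mono (leq_maxr i t) (maxn_ord_lt i t).
right; apply: ler_wpM2l; first lra.
exact: d_succ_le_top (maxn_ord_lt t j).
Qed.

Lemma pdiag_pow_entry_diag (k : nat) (i : 'I_n) : k%:R * d i.+1 <= pdiag_pow_entry k i i.
Proof. by rewrite /pdiag_pow_entry eqxx le_max lexx. Qed.

Lemma pdiag_pow_entry_offdiag (k : nat) (i j : 'I_n) :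
  i != j -> k.-1%:R * d (maxn i j).+1 <= pdiag_pow_entry k i j.
Proof. by move=> /negPf ij; rewrite /pdiag_pow_entry ij le_max lexx. Qed.

Lemma pdiag_pow_entry_top (c : nat) (top j : 'I_n) :
  top.+1 = n -> c.+1%:R * d n <= pdiag_pow_entry c.+2 top j.
Proof.
move=> topE; case: (eqVneq top j) => [<-|tj].
  apply: le_trans _ (pdiag_pow_entry_diag _ _); rewrite topE !mulrSr.
  by have := d_top_ge0; lra.
have maxE : (maxn top j).+1 = n by rewrite (maxn_idPl _) // -ltnS topE.
by rewrite -[in d n]maxE; exact: (pdiag_pow_entry_offdiag c.+2 _ _ tj).
Qed.

Lemma mp_pow_pdiag_succ (c : nat) :
  (forall t j : 'I_n, mp_pow (pdiag n d) c.+2 t j = (pdiag_pow_entry c.+2 t j)%:E) ->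
  forall i j : 'I_n, mp_pow (pdiag n d) c.+3 i j = (pdiag_pow_entry c.+3 i j)%:E.
Proof.
move=> IH i j; rewrite mp_powS (mp_mul_pdiagE IH).
apply: bigmaxe_fin_max => [t||]; first exact: pdiag_pow_entry_step_ub.
- rewrite !succnK; case: (eqVneq i j) => [<-|ij].
    exists i; rewrite eqxx; apply: le_trans _ (lerD (lexx _) (pdiag_pow_entry_diag _ _)).
    by rewrite !mulrSr; lra.
  have [le_ij|lt_ji] := leqP i j.
    exists j; rewrite (negPf ij) add0r.
    exact: pdiag_pow_entry_diag.
  exists i; rewrite eqxx.
  apply: le_trans _ (lerD (lexx _) (pdiag_pow_entry_offdiag _ _ _ ij)).
  by rewrite (maxn_idPl (ltnW lt_ji)) !mulrSr; lra.
- have n_gt0 : (0 < n)%N := leq_ltn_trans (leq0n i) (ltn_ord i).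
  have [top topE] : exists top : 'I_n, top.+1 = n.
    have lt_pred : (n.-1 < n)%N by rewrite ltn_predL.
    by exists (Ordinal lt_pred); exact: prednK.
  exists top; rewrite !succnK; apply: le_trans (pdiag_pow_entry_top c top j topE) _.
  by rewrite lerDr; case: eqP => [->|_]; rewrite ?topE.
Qed.

Lemma mp_pow_pdiag_two (i j : 'I_n) : mp_pow (pdiag n d) 2 i j = (pdiag_pow_entry 2 i j)%:E.
Proof.
have pdiagE t u : pdiag n d t u = (if t == u then d t.+1 else 0)%:E.
  by rewrite mxE; case: eqP.
rewrite mp_powS mp_pow1 (mp_mul_pdiagE pdiagE) /pdiag_pow_entry mul0r mul1r.
apply: bigmaxe_fin_max => [t||].
- rewrite le_max; apply/orP; case: (eqVneq i t) => [<-|it].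
    case: (eqVneq i j) => [_|ij]; left; first by rewrite mulr_natl mulr2n.
    by rewrite addr0; apply: d_succ_mono (leq_maxl i j) (maxn_ord_lt i j).
  rewrite add0r; case: (eqVneq t j) => [tj|_]; last by right.
  by left; rewrite -tj (negPf it); apply: d_succ_mono (leq_maxr i t) (maxn_ord_lt i t).
- case: (eqVneq i j) => [<-|ij].
    by exists i; rewrite eqxx mulr_natl mulr2n.
  have [le_ij|lt_ji] := leqP i j.
    by exists j; rewrite (negPf ij) eqxx add0r.
  by exists i; rewrite eqxx (negPf ij) addr0.
- have [t /andP[ti tj]] := exists_ord_neq2 _ i j n_gt2.
  by exists t; rewrite eq_sym (negPf ti) (negPf tj) addr0.
Qed.

Lemma mp_pow_pdiag (k : nat) (i j : 'I_n) :
  (2 <= k)%N -> mp_pow (pdiag n d) k i j = (pdiag_pow_entry k i j)%:E.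
Proof.
move=> k_ge2; have [c ->] : exists c, k = c.+2 by exists k.-2; lia.
elim: c i j => [|c IH]; [exact: mp_pow_pdiag_two | exact: mp_pow_pdiag_succ].
Qed.

End PdiagPowers.

Theorem proposition4p4 (R : realType) (n s : nat) (d : nat -> R)
  (hn : (3 <= n)%N) (hs1 : (1 <= s)%N) (hsn : (s < n)%N)
  (hmono : forall a b : nat, (1 <= a)%N -> (a <= b)%N -> (b <= n)%N -> d a <= d b)
  (hneg : forall a : nat, (1 <= a)%N -> (a <= s)%N -> d a <= 0)
  (hpos : forall a : nat, (s < a)%N -> (a <= n)%N -> 0 <= d a) :
  forall (k : nat), (2 <= k)%N ->
  forall i j : 'I_n,
    let i1 := i.+1 in let j1 := j.+1 in
    mp_pow (pdiag n d) k i j =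
      (if (maxn i1 j1 <= s)%N then (k.-2)%:R * d n
       else if i1 == j1 then Num.max (k%:R * d i1) ((k.-2)%:R * d n)
       else Num.max ((k.-1)%:R * d (maxn i1 j1)) ((k.-2)%:R * d n))%:E.
Proof.
move=> k k_ge2 i j i1 j1.
have dn_ge0 : 0 <= d n by apply: hpos.
rewrite (@mp_pow_pdiag _ _ _ hmono dn_ge0 hn k i j k_ge2) /pdiag_pow_entry /i1 /j1 maxnSS.
have -> : (i.+1 == j.+1) = (i == j) by [].
case: (ltnP (maxn i j) s) => [max_lt_s|_]; last by case: (i == j).
congr (_%:E); apply/max_idPr; apply: le_trans (mulr_ge0 (ler0n _ _) dn_ge0).
case: (i == j); apply: mulr_ge0_le0 => //; apply: hneg => //.
exact: leq_ltn_trans (leq_maxl i j) max_lt_s.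
Qed.
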